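(* Let $\mathbf{C}$ be a locally small category, $\Omega$ an object, $\Phi\colon\mathbf{C}^{\mathrm{op}}\to\mathbf{Pos}$ a functor whose fibres have all meets preserved by reindexing $f^*=\Phi f$, and $d_\Omega\in\Phi\Omega$. Let $\alpha_Y(S)=\bigwedge_{k\in S}k^*(d_\Omega)$, $\gamma_Y(d)=\{k\in\mathbf{C}(Y,\Omega)\mid d\preceq k^*(d_\Omega)\}$ and $\mathrm{cl}_Y=\gamma_Y\circ\alpha_Y$. Let $F\colon\mathbf{C}\to\mathbf{C}$ be a functor, $(\mathit{ev}_\lambda\colon F\Omega\to\Omega)_{\lambda\in\Lambda}$ morphisms, and $\Lambda_Y(S)=\{\mathit{ev}_\lambda\circ Fh\mid\lambda\in\Lambda,h\in S\}$. Let $X$ be an object and $\mathrm{cl}'_X$ a closure operator on $(\mathcal{P}(\mathbf{C}(X,\Omega)),\subseteq)$ that is a subclosure of $\mathrm{cl}_X$, i.e. $\mathrm{cl}'_X(S)\subseteq\mathrm{cl}_X(S)$ for all $S$. Then $\mathrm{cl}'_X$ is compatible (i.e. $\Lambda_X\circ\mathrm{cl}'_X\circ\mathrm{cl}_X\subseteq\mathrm{cl}_{FX}\circ\Lambda_X\circ\mathrm{cl}'_X$ pointwise) if and only if $\alpha_{FX}(\Lambda_X(\mathrm{cl}'_X(S)))\preceq\alpha_{FX}(\Lambda_X(\mathrm{cl}_X(S)))$ for all $S\subseteq\mathbf{C}(X,\Omega)$.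
   Context: A closure operator is a monotone, idempotent, extensive map. *)

Set Universe Polymorphism.

Record Category := {
  Ob : Type;
  hom : Ob -> Ob -> Type;
  idm : forall A, hom A A;
  comp : forall A B C, hom B C -> hom A B -> hom A C;   (* comp g f = g o f *)
  comp_id_l : forall A B (f : hom A B), comp A B B (idm B) f = f;
  comp_id_r : forall A B (f : hom A B), comp A A B f (idm A) = f;
  comp_assoc : forall A B C D (f : hom A B) (g : hom B C) (h : hom C D),
      comp A C D h (comp A B C g f) = comp A B D (comp B C D h g) f
}.
Arguments idm {c} A.
Arguments comp {c A B C} g f.

Record Functor (C : Category) := {
  Fob : Ob C -> Ob C;
  Fmap : forall A B, hom C A B -> hom C (Fob A) (Fob B);
  Fmap_id : forall A, Fmap A A (@idm C A) = @idm C (Fob A);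
  Fmap_comp : forall A B D (f : hom C A B) (g : hom C B D),
      Fmap A D (@comp C A B D g f) = @comp C (Fob A) (Fob B) (Fob D) (Fmap B D g) (Fmap A B f)
}.
Arguments Fob {C} f0 A.
Arguments Fmap {C} f0 {A B} h.

(** A functor Phi : C^op -> Pos whose fibres have all meets, preserved by
    reindexing f^* = Phi f. Subsets of a fibre are predicates. *)
Record MeetIndexedPoset (C : Category) := {
  fib : Ob C -> Type;
  le : forall Y, fib Y -> fib Y -> Prop;
  le_refl : forall Y (a : fib Y), le Y a a;
  le_trans : forall Y (a b c : fib Y), le Y a b -> le Y b c -> le Y a c;
  le_antisym : forall Y (a b : fib Y), le Y a b -> le Y b a -> a = b;
  meet : forall Y, (fib Y -> Prop) -> fib Y;
  meet_lb : forall Y (A : fib Y -> Prop) (a : fib Y), A a -> le Y (meet Y A) a;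
  meet_glb : forall Y (A : fib Y -> Prop) (b : fib Y),
      (forall a, A a -> le Y b a) -> le Y b (meet Y A);
  reindex : forall X Y, hom C X Y -> fib Y -> fib X;
  reindex_mono : forall X Y (f : hom C X Y) (a b : fib Y),
      le Y a b -> le X (reindex X Y f a) (reindex X Y f b);
  reindex_id : forall Y (a : fib Y), reindex Y Y (@idm C Y) a = a;
  reindex_comp : forall X Y Z (f : hom C X Y) (g : hom C Y Z) (a : fib Z),
      reindex X Z (@comp C X Y Z g f) a = reindex X Y f (reindex Y Z g a);
  reindex_meet : forall X Y (f : hom C X Y) (A : fib Y -> Prop),
      reindex X Y f (meet Y A) = meet X (fun b => exists a, A a /\ b = reindex X Y f a)
}.
Arguments fib {C} m Y.
Arguments le {C m Y} a b.
Arguments meet {C m Y} A.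
Arguments reindex {C m X Y} f a.

Section Galois.
Variables (C : Category) (Phi : MeetIndexedPoset C) (Om : Ob C) (dOm : fib Phi Om).

Definition alpha (Y : Ob C) (S : hom C Y Om -> Prop) : fib Phi Y :=
  meet (fun b => exists k, S k /\ b = reindex k dOm).

Definition gamma (Y : Ob C) (d : fib Phi Y) : hom C Y Om -> Prop :=
  fun k => le d (reindex k dOm).

Definition cl (Y : Ob C) (S : hom C Y Om -> Prop) : hom C Y Om -> Prop :=
  gamma Y (alpha Y S).
End Galois.
Arguments alpha {C} Phi {Om} dOm {Y} S.
Arguments gamma {C} Phi {Om} dOm {Y} d k.
Arguments cl {C} Phi {Om} dOm {Y} S k.

Definition LambdaOp {C : Category} (F : Functor C) {Om : Ob C} {Lam : Type}
  (ev : Lam -> hom C (Fob F Om) Om) {Y : Ob C} (S : hom C Y Om -> Prop)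
  : hom C (Fob F Y) Om -> Prop :=
  fun g => exists (l : Lam) (h : hom C Y Om), S h /\ g = comp (ev l) (Fmap F h).

Definition subset {T : Type} (A B : T -> Prop) : Prop := forall x, A x -> B x.

Definition closure_op {T : Type} (c : (T -> Prop) -> (T -> Prop)) : Prop :=
  (forall A B, subset A B -> subset (c A) (c B)) /\
  (forall A, subset A (c A)) /\
  (forall A, subset (c (c A)) (c A) /\ subset (c A) (c (c A))).

(* alpha and gamma form an antitone Galois connection, so S ⊆ cl T holds
   exactly when alpha T ≤ alpha S, and compatibility of cl' becomes
   alpha (Λ (cl' S)) ≤ alpha (Λ (cl' (cl S))) for all S.  A subclosure of the
   idempotent cl fixes every cl-closed set, since
   cl S ⊆ cl' (cl S) ⊆ cl (cl S) = cl S; hence Λ (cl' (cl S)) = Λ (cl S) and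
   the two conditions coincide. *)

Section Closure.
Variables (C : Category) (Phi : MeetIndexedPoset C) (Om : Ob C) (dOm : fib Phi Om).

Lemma alpha_antimono (Y : Ob C) (A B : hom C Y Om -> Prop) :
  subset A B -> le (alpha Phi dOm B) (alpha Phi dOm A).
Proof.
  intros HAB. apply meet_glb. intros a [k [Hk ->]].
  apply meet_lb. exists k. auto.
Qed.

Lemma subset_cl_iff_alpha (Y : Ob C) (A B : hom C Y Om -> Prop) :
  subset A (cl Phi dOm B) <-> le (alpha Phi dOm B) (alpha Phi dOm A).
Proof.
  split.
  - intros HA. apply meet_glb. intros a [k [Hk ->]]. exact (HA k Hk).
  - intros Hle k Hk. eapply le_trans; [exact Hle |].
    apply meet_lb. exists k. auto.
Qed.

Lemma cl_idem (Y : Ob C) (S : hom C Y Om -> Prop) :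
  subset (cl Phi dOm (cl Phi dOm S)) (cl Phi dOm S).
Proof.
  intros k Hk. eapply le_trans; [| exact Hk].
  apply subset_cl_iff_alpha. intros h Hh. exact Hh.
Qed.

Lemma subclosure_cl_closed (Y : Ob C)
    (clp : (hom C Y Om -> Prop) -> (hom C Y Om -> Prop))
    (Hext : forall S, subset S (clp S))
    (Hsub : forall S, subset (clp S) (cl Phi dOm S))
    (S : hom C Y Om -> Prop) :
  subset (cl Phi dOm S) (clp (cl Phi dOm S)) /\
  subset (clp (cl Phi dOm S)) (cl Phi dOm S).
Proof.
  split.
  - apply Hext.
  - intros k Hk. apply cl_idem, Hsub, Hk.
Qed.

End Closure.

Lemma LambdaOp_mono {C : Category} (F : Functor C) {Om : Ob C} {Lam : Type}
    (ev : Lam -> hom C (Fob F Om) Om) {Y : Ob C} (A B : hom C Y Om -> Prop) :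
  subset A B -> subset (LambdaOp F ev A) (LambdaOp F ev B).
Proof.
  intros HAB g [l [h [Hh ->]]]. exists l, h. auto.
Qed.

Theorem lemma2 (C : Category) (Om : Ob C) (Phi : MeetIndexedPoset C)
  (dOm : fib Phi Om) (F : Functor C) (Lam : Type)
  (ev : Lam -> hom C (Fob F Om) Om) (X : Ob C)
  (clp : (hom C X Om -> Prop) -> (hom C X Om -> Prop))
  (Hclosure : closure_op clp)
  (Hsub : forall S, subset (clp S) (cl Phi dOm S)) :
  (forall S : hom C X Om -> Prop,
     subset (LambdaOp F ev (clp (cl Phi dOm S)))
            (cl Phi dOm (LambdaOp F ev (clp S))))
  <->
  (forall S : hom C X Om -> Prop,
     le (alpha Phi dOm (LambdaOp F ev (clp S)))
        (alpha Phi dOm (LambdaOp F ev (cl Phi dOm S)))).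
Proof.
  destruct Hclosure as [_ [Hext _]].
  split; intros Hyp S;
    destruct (subclosure_cl_closed C Phi Om dOm X clp Hext Hsub S)
      as [Hcl_clp Hclp_cl].
  - eapply le_trans; [apply subset_cl_iff_alpha, Hyp |].
    apply alpha_antimono, LambdaOp_mono, Hcl_clp.
  - apply subset_cl_iff_alpha. eapply le_trans; [apply Hyp |].
    apply alpha_antimono, LambdaOp_mono, Hclp_cl.
Qed.
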